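(* In the setting described in the context, with all standing assumptions in force, for every $i\in\{1,\dots,N\}$: $$\lim_{t\to\infty}\|\mathbf x_{(i,:)}^t-\bar{\mathbf s}^t\|=0,\qquad \sum_{t=0}^\infty\gamma^t\|\mathbf x_{(i,:)}^t-\bar{\mathbf s}^t\|<\infty,\qquad \sum_{t=0}^\infty\|\mathbf x_{(i,:)}^t-\bar{\mathbf s}^t\|^2<\infty.$$
   Context: Problem. Let $N,B,d\ge1$. A vector $\mathbf x\in\mathbb R^{dB}$ is partitioned into blocks $\mathbf x=(\mathbf x_1,\dots,\mathbf x_B)$ with $\mathbf x_\ell\in\mathbb R^d$, and $\nabla_\ell$ denotes the partial gradient with respect to block $\ell$. Problem (P) is $$\min_{\mathbf x}\ U(\mathbf x)=\sum_{i=1}^Nf_i(\mathbf x)+\sum_{\ell=1}^B r_\ell(\mathbf x_\ell)\quad\text{s.t. }\mathbf x_\ell\in\mathcal K_\ell,\ \ell=1,\dots,B,$$ with $\mathcal K=\mathcal K_1\times\dots\times\mathcal K_B$. Problem assumptions: - each $\mathcal K_\ell\subseteq\mathbb R^d$ is nonempty, closed and convex; - each $f_i:\mathbb R^{dB}\to\mathbb R$ is $C^1$ on an open set containing $\mathcal K$, and $\nabla f_i$ is $L_i$-Lipschitz continuous and bounded on $\mathcal K$; - each $r_\ell:\mathbb R^d\to\mathbb R$ is convex with bounded subgradients on $\mathcal K_\ell$; - $U$ is coercive on $\mathcal K$. Network. $\mathcal G=(\{1,\dots,N\},\mathcal E)$ is a fixed, strongly connected digraph containing all self-loops. The in-neighbor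 set of $i$ is $\mathcal N_i=\{j:(j,i)\in\mathcal E\}$. Block selection. At each iteration $t\ge0$, agent $i$ picks $\ell_i^t\in\{1,\dots,B\}$. For each $i$ there is a finite $T_i>0$ with $\bigcup_{\tau=0}^{T_i-1}\{\ell_i^{t+\tau}\}=\{1,\dots,B\}$ for all $t\ge0$. Define $\mathcal N_{i,\ell}^t=\{j\in\mathcal N_i:\ell_j^t=\ell\}\cup\{i\}$ and $\mathcal E_\ell^t=\{(j,i)\in\mathcal E:j\in\mathcal N_{i,\ell}^t\}$. Weights. For each $\ell$ and $t$, $A_\ell^t=[a_{ij\ell}^t]$ satisfies $a_{ij\ell}^t>\kappa$ if $(j,i)\in\mathcal E_\ell^t$, $a_{ij\ell}^t=0$ otherwise (for a fixed $\kappa>0$), and $\mathbf 1^\top A_\ell^t=\mathbf 1^\top$. Surrogates. For each $i,\ell$, $\tilde f_{i,\ell}:\mathcal K_\ell\times\mathcal K\to\mathbb R$ satisfies: - $\tilde f_{i,\ell}(\cdot;\mathbf x)$ is $C^1$ and $\tau_i$-strongly convex on $\mathcal K_\ell$ uniformly in $\mathbf x\in\mathcal K$, with $\tau_i>0$; - $\nabla\tilde f_{i,\ell}(\mathbf x_\ell;\mathbf x)=\nabla_\ell f_i(\mathbf x)$ for all $\mathbf x\in\mathcal K$, where $\nabla\tilde f_{i,\ell}$ is the gradient in the first argument and $\mathbf x_\ell$ is the $\ell$-th block of $\mathbf x$; - $\nabla\tilde f_{i,\ell}(\mathbf z;\cdot)$ is Lipschitz continuous on $\mathcal K$ uniformly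 in $\mathbf z\in\mathcal K_\ell$. For $\mathbf w\in\mathcal K$ and $\mathbf g\in\mathbb R^d$ let $$\hat f_{i,\ell}(\mathbf z;\mathbf w,\mathbf g)=\tilde f_{i,\ell}(\mathbf z;\mathbf w)+(N\mathbf g-\nabla_\ell f_i(\mathbf w))^\top(\mathbf z-\mathbf w_\ell).$$ Step sizes. $0<\gamma^t\le1$, $\gamma^{t+1}\le\gamma^t$, $\sum_t\gamma^t=\infty$, $\sum_t(\gamma^t)^2<\infty$. Algorithm. Agent $i$ holds $\mathbf x_{(i,:)}^t=(\mathbf x_{(i,\ell)}^t)_\ell$, $\mathbf y_{(i,:)}^t=(\mathbf y_{(i,\ell)}^t)_\ell$ in $\mathbb R^{dB}$ and scalars $\phi_{(i,\ell)}^t$. Initialization: $\mathbf x_{(i,:)}^0\in\mathcal K$ arbitrary, $\mathbf y_{(i,:)}^0=\nabla f_i(\mathbf x_{(i,:)}^0)$, $\phi_{(i,\ell)}^0=1$. At iteration $t$, each agent $i$: - computes $\tilde{\mathbf x}_{(i,\ell_i^t)}^t=\arg\min_{\mathbf z\in\mathcal K_{\ell_i^t}}\hat f_{i,\ell_i^t}(\mathbf z;\mathbf x_{(i,:)}^t,\mathbf y_{(i,\ell_i^t)}^t)+r_{\ell_i^t}(\mathbf z)$; - sets $\Delta\mathbf x_{(i,\ell)}^t=\tilde{\mathbf x}_{(i,\ell)}^t-\mathbf x_{(i,\ell)}^t$ if $\ell=\ell_i^t$ and $\Delta\mathbf x_{(i,\ell)}^t=\mathbf 0$ otherwise; - for every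 $\ell$ updates $$\phi_{(i,\ell)}^{t+1}=\sum_{j\in\mathcal N_{i,\ell}^t}a_{ij\ell}^t\phi_{(j,\ell)}^t,\qquad \mathbf x_{(i,\ell)}^{t+1}=\sum_{j\in\mathcal N_{i,\ell}^t}\frac{a_{ij\ell}^t\phi_{(j,\ell)}^t}{\phi_{(i,\ell)}^{t+1}}\big(\mathbf x_{(j,\ell)}^t+\gamma^t\Delta\mathbf x_{(j,\ell)}^t\big),$$ $$\mathbf y_{(i,\ell)}^{t+1}=\sum_{j\in\mathcal N_{i,\ell}^t}\frac{a_{ij\ell}^t}{\phi_{(i,\ell)}^{t+1}}\Big(\phi_{(j,\ell)}^t\mathbf y_{(j,\ell)}^t+\nabla_\ell f_j(\mathbf x_{(j,:)}^{t+1})-\nabla_\ell f_j(\mathbf x_{(j,:)}^t)\Big).$$ Weighted average: $\bar{\mathbf s}^t=\frac1N\big(\sum_{i=1}^N\phi_{(i,\ell)}^t\mathbf x_{(i,\ell)}^t\big)_{\ell=1}^B$. *)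

(* All indices are 0-based. *)
From Stdlib Require Import Reals.
From HB Require Import structures.
From mathcomp Require Import all_boot.

Set Implicit Arguments.
Unset Strict Implicit.
Unset Printing Implicit Defensive.

Local Open Scope R_scope.

HB.instance Definition _ := Monoid.isComLaw.Build R R0 Rplus
  (fun a b c => esym (Rplus_assoc a b c)) Rplus_comm Rplus_0_l.

Definition blk (d : nat) := 'I_d -> R.
(* a full vector in R^{dB} = (R^d)^B, block l, coordinate k *)
Definition pt (d B : nat) := 'I_B -> 'I_d -> R.

Definition dotd {d} (u v : blk d) : R := \big[Rplus/0]_(k < d) (u k * v k).
Definition normd {d} (u : blk d) : R := sqrt (dotd u u).
Definition subd {d} (u v : blk d) : blk d := fun k => u k - v k.
Definition addd {d} (u v : blk d) : blk d := fun k => u k + v k.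
Definition scald {d} (a : R) (u : blk d) : blk d := fun k => a * u k.

Definition dotP {d B} (x y : pt d B) : R :=
  \big[Rplus/0]_(l < B) dotd (x l) (y l).
Definition normP {d B} (x : pt d B) : R := sqrt (dotP x x).
Definition subP {d B} (x y : pt d B) : pt d B := fun l k => x l k - y l k.

Section Generic.
Variables (V : Type) (dot : V -> V -> R) (sub : V -> V -> V).
Let nrm (v : V) := sqrt (dot v v).

Definition is_open (O : V -> Prop) : Prop :=
  forall x, O x -> exists eps, 0 < eps /\ forall y, nrm (sub y x) < eps -> O y.

Definition seq_cv (u : nat -> V) (v : V) : Prop :=
  forall eps, 0 < eps -> exists M, forall n, (M <= n)%nat -> nrm (sub (u n) v) < eps.

Definition is_closed (S : V -> Prop) : Prop :=
  forall (u : nat -> V) v, (forall n, S (u n)) -> seq_cv u v -> S v.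

Definition has_gradient_at (f : V -> R) (g : V -> V) (x : V) : Prop :=
  forall eps, 0 < eps -> exists delta, 0 < delta /\
    forall y, nrm (sub y x) < delta ->
      Rabs (f y - f x - dot (g x) (sub y x)) <= eps * nrm (sub y x).

Definition continuous_on (O : V -> Prop) (g : V -> V) : Prop :=
  forall x, O x -> forall eps, 0 < eps -> exists delta, 0 < delta /\
    forall y, O y -> nrm (sub y x) < delta -> nrm (sub (g y) (g x)) < eps.

Definition C1_near (S : V -> Prop) (f : V -> R) (g : V -> V) : Prop :=
  exists O : V -> Prop, is_open O /\ (forall x, S x -> O x) /\
    (forall x, O x -> has_gradient_at f g x) /\ continuous_on O g.
End Generic.

Definition convex_set {d} (S : blk d -> Prop) : Prop :=
  forall u v a, S u -> S v -> 0 <= a <= 1 ->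
    S (addd (scald a u) (scald (1 - a) v)).

Definition convex_fun {d} (r : blk d -> R) : Prop :=
  forall u v a, 0 <= a <= 1 ->
    r (addd (scald a u) (scald (1 - a) v)) <= a * r u + (1 - a) * r v.

Definition strongly_convex_on {d} (S : blk d -> Prop) (tau : R) (h : blk d -> R)
  : Prop :=
  forall u v a, S u -> S v -> 0 <= a <= 1 ->
    h (addd (scald a u) (scald (1 - a) v))
      <= a * h u + (1 - a) * h v - tau / 2 * a * (1 - a) * (normd (subd u v)) ^ 2.

Definition is_subgradient {d} (r : blk d -> R) (u g : blk d) : Prop :=
  forall w, r u + dotd g (subd w u) <= r w.

Definition bounded_subgradients_on {d} (S : blk d -> Prop) (r : blk d -> R) : Prop :=
  exists M, forall u g, S u -> is_subgradient r u g -> normd g <= M.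

Definition inK {d B} (K : 'I_B -> blk d -> Prop) (x : pt d B) : Prop :=
  forall l, K l (x l).

(* E j i means (j,i) is an edge, i.e. j is an in-neighbour of i.
   strongly connected: a directed path from every node to every node. *)
Definition strongly_connected {N} (E : rel 'I_N) : Prop :=
  forall i j, connect E i j.

Definition inNil {N B} (E : rel 'I_N) (sel : nat -> 'I_N -> 'I_B)
  (t : nat) (i : 'I_N) (l : 'I_B) (j : 'I_N) : bool :=
  (E j i && (sel t j == l)) || (j == i).

Definition dx {d B N} (sel : nat -> 'I_N -> 'I_B) (x : nat -> 'I_N -> pt d B)
  (xt : nat -> 'I_N -> blk d) (t : nat) (j : 'I_N) (l : 'I_B) : blk d :=
  if l == sel t j then subd (xt t j) (x t j l) else (fun _ => 0).

Definition sbar {d B N} (phi : nat -> 'I_N -> 'I_B -> R)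
  (x : nat -> 'I_N -> pt d B) (t : nat) : pt d B :=
  fun l k => / INR N * \big[Rplus/0]_(i < N) (phi t i l * x t i l k).

Definition psum (u : nat -> R) (n : nat) : R := sum_f_R0 u n.

Definition fhat {d B N} (ft : 'I_N -> 'I_B -> blk d -> pt d B -> R)
  (gf : 'I_N -> pt d B -> pt d B) (i : 'I_N) (l : 'I_B)
  (z : blk d) (w : pt d B) (g : blk d) : R :=
  ft i l z w + dotd (subd (scald (INR N) g) (gf i w l)) (subd z (w l)).

Definition Uobj {d B N} (f : 'I_N -> pt d B -> R) (r : 'I_B -> blk d -> R)
  (x : pt d B) : R :=
  \big[Rplus/0]_(i < N) f i x + \big[Rplus/0]_(l < B) r l (x l).

From Stdlib Require Import Reals Lra Psatz FunctionalExtensionality.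
From HB Require Import structures.
From mathcomp Require Import all_boot zify.

Set Implicit Arguments.
Unset Strict Implicit.
Unset Printing Implicit Defensive.

Local Open Scope R_scope.

(* For each block l and coordinate k, rescaling by phi turns the update of x
   into a row-stochastic averaging along the graph active at step t, perturbed
   by gamma^t Delta x.  Since phi keeps total mass N and this mass spreads
   through the strongly connected network, phi, and hence the averaging
   weights, stay above a uniform positive bound; so over every window of N T
   steps the spread max - min of the agents' values contracts by a fixed factor
   1 - rho, up to the accumulated perturbation.  The perturbation is
   O(gamma^t): y tracks the bounded average gradient and has bounded spread by
   the same argument, hence y is bounded, and strong convexity of the surrogate
   bounds Delta x in terms of y.  The resulting recursion
   D(t + N T) <= (1 - rho) D(t) + C gamma^t, with gamma nonincreasing and square
   summable, makes gamma D and D^2 summable, and each agent lies within D of the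
   weighted average. *)

Lemma bigR_mulr (I : Type) (r : seq I) (P : pred I) (F : I -> R) c :
  c * \big[Rplus/0]_(i <- r | P i) F i = \big[Rplus/0]_(i <- r | P i) (c * F i).
Proof.
elim/big_rec2: _ => [|i y1 y2 _ <-]; first by rewrite Rmult_0_r.
by rewrite Rmult_plus_distr_l.
Qed.

Lemma bigR_mull (I : Type) (r : seq I) (P : pred I) (F : I -> R) c :
  \big[Rplus/0]_(i <- r | P i) F i * c = \big[Rplus/0]_(i <- r | P i) (F i * c).
Proof.
rewrite Rmult_comm bigR_mulr; apply: eq_bigr => i _; apply: Rmult_comm.
Qed.

Lemma bigR_le (I : Type) (r : seq I) (P : pred I) (F G : I -> R) :
  (forall i, P i -> F i <= G i) ->
  \big[Rplus/0]_(i <- r | P i) F i <= \big[Rplus/0]_(i <- r | P i) G i.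
Proof.
move=> H; elim/big_rec2: _ => [|i y1 y2 Pi Hy]; first lra.
by have := H i Pi; lra.
Qed.

Lemma bigR_ge0 (I : Type) (r : seq I) (P : pred I) (F : I -> R) :
  (forall i, P i -> 0 <= F i) -> 0 <= \big[Rplus/0]_(i <- r | P i) F i.
Proof.
move=> H; elim/big_rec: _ => [|i y Pi Hy]; first lra.
by have := H i Pi; lra.
Qed.

Lemma bigR_abs (I : Type) (r : seq I) (P : pred I) (F : I -> R) :
  Rabs (\big[Rplus/0]_(i <- r | P i) F i) <= \big[Rplus/0]_(i <- r | P i) Rabs (F i).
Proof.
apply: (big_rec2 (fun y1 y2 => Rabs y1 <= y2)) => [|i y1 y2 _ Hy].
  by rewrite Rabs_R0; lra.
by have := Rabs_triang (F i) y1; lra.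
Qed.

Lemma bigR_term_le (I : finType) (P : pred I) (F : I -> R) j :
  (forall i, P i -> 0 <= F i) -> P j -> F j <= \big[Rplus/0]_(i | P i) F i.
Proof.
move=> H Pj; rewrite (bigD1 j Pj) /=.
have : 0 <= \big[Rplus/0]_(i | P i && (i != j)) F i.
  by apply: bigR_ge0 => i /andP [Pi _]; apply: H.
lra.
Qed.

Lemma bigR_const_ord n c : \big[Rplus/0]_(u < n) c = INR n * c.
Proof.
elim: n => [|n IH]; first by rewrite big_ord0 /=; ring.
by rewrite big_ord_recr IH S_INR /=; ring.
Qed.

Lemma bigR_sub (I : Type) (r : seq I) (P : pred I) (F G : I -> R) :
  \big[Rplus/0]_(i <- r | P i) (F i - G i) =
  \big[Rplus/0]_(i <- r | P i) F i - \big[Rplus/0]_(i <- r | P i) G i.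
Proof.
rewrite (eq_bigr (fun i => F i + (-1) * G i)); last by move=> i _; ring.
by rewrite big_split /= -bigR_mulr; ring.
Qed.

Lemma bigR_sqrt_le (I : Type) (r : seq I) (P : pred I) (F : I -> R) :
  (forall i, P i -> 0 <= F i) ->
  sqrt (\big[Rplus/0]_(i <- r | P i) F i) <= \big[Rplus/0]_(i <- r | P i) sqrt (F i).
Proof.
move=> H.
suff [] : 0 <= \big[Rplus/0]_(i <- r | P i) F i /\
  sqrt (\big[Rplus/0]_(i <- r | P i) F i) <= \big[Rplus/0]_(i <- r | P i) sqrt (F i) by [].
apply: (big_rec2 (fun y1 y2 => 0 <= y1 /\ sqrt y1 <= y2)) => [|i y1 y2 Pi [Hy0 Hy]].
  by rewrite sqrt_0; lra.
have Fi := H i Pi; split; first lra.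
suff : sqrt (F i + y1) <= sqrt (F i) + sqrt y1 by lra.
apply: Rsqr_incr_0_var; last by have := sqrt_pos (F i); have := sqrt_pos y1; lra.
rewrite Rsqr_sqrt; last lra.
rewrite /Rsqr; have := sqrt_sqrt (F i) Fi; have := sqrt_sqrt y1 Hy0.
have := sqrt_pos (F i); have := sqrt_pos y1; nra.
Qed.

Lemma bigR_convex_le (I : finType) (P : pred I) (w v : I -> R) M :
  (forall j, P j -> 0 <= w j) -> \big[Rplus/0]_(j | P j) w j = 1 ->
  (forall j, P j -> v j <= M) -> \big[Rplus/0]_(j | P j) (w j * v j) <= M.
Proof.
move=> Hw H1 Hv.
apply: Rle_trans (_ : \big[Rplus/0]_(j | P j) (w j * M) <= _).
  by apply: bigR_le => j Pj; apply: Rmult_le_compat_l; auto.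
by rewrite -bigR_mull H1; lra.
Qed.

Lemma bigR_convex_ge (I : finType) (P : pred I) (w v : I -> R) M :
  (forall j, P j -> 0 <= w j) -> \big[Rplus/0]_(j | P j) w j = 1 ->
  (forall j, P j -> M <= v j) -> M <= \big[Rplus/0]_(j | P j) (w j * v j).
Proof.
move=> Hw H1 Hv.
apply: Rle_trans (_ : \big[Rplus/0]_(j | P j) (w j * M) <= _).
  by rewrite -bigR_mull H1; lra.
by apply: bigR_le => j Pj; apply: Rmult_le_compat_l; auto.
Qed.

Lemma dotd_ge0 d (u : blk d) : 0 <= dotd u u.
Proof. by apply: bigR_ge0 => k _; nra. Qed.

Lemma normd_ge0 d (u : blk d) : 0 <= normd u.
Proof. exact: sqrt_pos. Qed.

Lemma normd_sq d (u : blk d) : normd u * normd u = dotd u u.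
Proof. by rewrite /normd sqrt_sqrt //; apply: dotd_ge0. Qed.

Lemma Rabs_le_normd d (u : blk d) k : Rabs (u k) <= normd u.
Proof.
rewrite /normd -sqrt_Rsqr_abs; apply: sqrt_le_1_alt; rewrite /Rsqr.
by apply: (@bigR_term_le _ xpredT (fun k => u k * u k)) => // i _; nra.
Qed.

Lemma normd_le_sum_abs d (u : blk d) : normd u <= \big[Rplus/0]_(k < d) Rabs (u k).
Proof.
apply: Rle_trans; first by apply: bigR_sqrt_le => i _; nra.
by apply: bigR_le => k _; rewrite -(sqrt_Rsqr_abs (u k)) /Rsqr; lra.
Qed.

Lemma normP_ge0 d B (u : pt d B) : 0 <= normP u.
Proof. exact: sqrt_pos. Qed.

Lemma Rabs_le_normP d B (u : pt d B) l k : Rabs (u l k) <= normP u.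
Proof.
apply: Rle_trans (Rabs_le_normd (u l) k) _; apply: sqrt_le_1_alt.
by apply: (@bigR_term_le _ xpredT (fun l => dotd (u l) (u l))) => // i _; apply: dotd_ge0.
Qed.

Lemma normP_le_sum_abs d B (u : pt d B) :
  normP u <= \big[Rplus/0]_(l < B) \big[Rplus/0]_(k < d) Rabs (u l k).
Proof.
apply: Rle_trans; first by apply: bigR_sqrt_le => i _; apply: dotd_ge0.
by apply: bigR_le => l _; apply: normd_le_sum_abs.
Qed.

Lemma dotd_sq_le d (u v : blk d) : dotd u v ^ 2 <= dotd u u * dotd v v.
Proof.
have lagrange : \big[Rplus/0]_(k < d) \big[Rplus/0]_(j < d) (u k * v j - u j * v k) ^ 2
    = 2 * (dotd u u * dotd v v - dotd u v ^ 2).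
  have inner k : \big[Rplus/0]_(j < d) (u k * v j - u j * v k) ^ 2 =
      u k * u k * dotd v v + v k * v k * dotd u u + (-2 * (u k * v k)) * dotd u v.
    rewrite /dotd !bigR_mulr -!big_split /=; apply: eq_bigr => j _; ring.
  rewrite (eq_bigr _ (fun k _ => inner k)) !big_split /= -!bigR_mull -bigR_mulr.
  by rewrite /dotd; set A := \big[Rplus/0]_(k < d) _; set C := \big[Rplus/0]_(k < d) _;
    set D := \big[Rplus/0]_(k < d) _; ring.
have : 0 <= \big[Rplus/0]_(k < d) \big[Rplus/0]_(j < d) (u k * v j - u j * v k) ^ 2.
  by apply: bigR_ge0 => k _; apply: bigR_ge0 => j _; apply: pow2_ge_0.
lra.
Qed.

Lemma cauchy_schwarz d (u v : blk d) : Rabs (dotd u v) <= normd u * normd v.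
Proof.
have nu := normd_ge0 u; have nv := normd_ge0 v.
apply: Rsqr_incr_0_var; last nra.
rewrite -Rsqr_abs /Rsqr.
have -> : normd u * normd v * (normd u * normd v) = dotd u u * dotd v v.
  by rewrite -normd_sq -normd_sq; ring.
by have := dotd_sq_le u v; rewrite /=; lra.
Qed.

(** * Subgradients of convex functions *)

Lemma blk_congr d (T : Type) (F : blk d -> T) (u v : blk d) :
  (forall k, u k = v k) -> F u = F v.
Proof. by move=> H; rewrite (functional_extensionality u v H). Qed.

Lemma blk_set_ext d (C : blk d -> Prop) (u v : blk d) : (forall k, u k = v k) -> C v -> C u.
Proof. by move=> H; rewrite (functional_extensionality u v H). Qed.

Lemma dotd_linear_r d (g u w : blk d) a b :
  dotd g (fun k => a * u k + b * w k) = a * dotd g u + b * dotd g w.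
Proof. by rewrite /dotd !bigR_mulr -big_split /=; apply: eq_bigr => k _; ring. Qed.

Definition basis_blk d (e : 'I_d) : blk d := fun k => if k == e then 1 else 0.

Definition vanishes_from d (n : nat) (v : blk d) := forall k : 'I_d, (n <= k)%nat -> v k = 0.

(* A linear minorant of a convex [q] with [q 0 = 0] is built one coordinate at a
   time, as in the proof of the Hahn-Banach theorem. *)
Section LinearMinorant.
Variables (d : nat) (q : blk d -> R).
Hypothesis q0 : q (fun _ => 0) = 0.
Hypothesis q_convex : convex_fun q.

Definition minorant_on (S : blk d -> Prop) (g : blk d) := forall v, S v -> dotd g v <= q v.

Lemma minorant_slopes_le n g (e : 'I_d) m m' s t :
  minorant_on (vanishes_from n) g -> vanishes_from n m -> vanishes_from n m' ->
  0 < s -> 0 < t ->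
  t * (dotd g m' - q (fun k => m' k - s * basis_blk e k)) <=
  s * (q (fun k => m k + t * basis_blk e k) - dotd g m).
Proof.
move=> Hg Hm Hm' Hs Ht.
pose a := t / (s + t).
have Ha : 0 <= a <= 1.
  split; first by apply: Rle_mult_inv_pos; lra.
  apply: (Rmult_le_reg_r (s + t)); first lra.
  by rewrite /a /Rdiv Rmult_assoc Rinv_l; lra.
have hc := q_convex (fun k => m' k - s * basis_blk e k) (fun k => m k + t * basis_blk e k) Ha.
rewrite (blk_congr q (v := fun k => a * m' k + (1 - a) * m k)) in hc; last first.
  by move=> k; rewrite /addd /scald /a; field; lra.
have hg : dotd g (fun k => a * m' k + (1 - a) * m k) <= q (fun k => a * m' k + (1 - a) * m k).
  by apply: Hg => k Hk; rewrite Hm // Hm' //; ring.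
rewrite dotd_linear_r in hg.
have h := Rmult_le_compat_l (s + t) _ _ (ltac:(lra) : 0 <= s + t) (Rle_trans _ _ _ hg hc).
have e1 X Y : (s + t) * (a * X + (1 - a) * Y) = t * X + s * Y by rewrite /a; field; lra.
rewrite !e1 in h; lra.
Qed.

Lemma minorant_extend_with n (e : 'I_d) g c : nat_of_ord e = n ->
  minorant_on (vanishes_from n) g ->
  (forall m s, vanishes_from n m -> 0 < s ->
     (dotd g m - q (fun k => m k - s * basis_blk e k)) / s <= c) ->
  (forall m t, vanishes_from n m -> 0 < t ->
     c <= (q (fun k => m k + t * basis_blk e k) - dotd g m) / t) ->
  minorant_on (vanishes_from n.+1) (fun k => if k == e then c else g k).
Proof.
move=> He Hg Hlow Hup v Hv.
pose m k := if k == e then 0 else v k.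
have Hm : vanishes_from n m.
  move=> k Hk; rewrite /m; case: eqP => // /eqP Hke; apply: Hv.
  have : nat_of_ord k != n by rewrite -He; apply: contra Hke => /eqP/val_inj ->.
  lia.
pose t := v e.
have Hdot : dotd (fun k => if k == e then c else g k) v = dotd g m + c * t.
  have -> : c * t = \big[Rplus/0]_k (if k == e then c * t else 0).
    by rewrite -big_mkcond big_pred1_eq.
  by rewrite /dotd -big_split /=; apply: eq_bigr => k _; rewrite /m /t; case: eqP => [->|_]; ring.
have Hv' s : s = t -> (fun k => m k + s * basis_blk e k) = v.
  by move=> ->; apply: functional_extensionality => k; rewrite /m /basis_blk /t; case: eqP => [->|_]; ring.
rewrite Hdot; case: (Rtotal_order t 0) => [Htn|[Ht0|Htp]].
- have := Hlow m (- t) Hm (ltac:(lra)).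
  rewrite (blk_congr q (v := v)); last by move=> k; rewrite -(Hv' t) //; ring.
  move=> h; have := Rmult_le_compat_r (- t) _ _ (ltac:(lra) : 0 <= - t) h.
  by rewrite /Rdiv Rmult_assoc Rinv_l; lra.
- have := Hg m Hm; rewrite -(Hv' 0) // Ht0.
  by rewrite (blk_congr q (v := m)); [lra | move=> k; ring].
- have := Hup m t Hm Htp; rewrite Hv' // => h.
  have := Rmult_le_compat_r t _ _ (ltac:(lra) : 0 <= t) h.
  by rewrite /Rdiv Rmult_assoc Rinv_l; lra.
Qed.

Lemma minorant_extend n g : (n < d)%nat ->
  minorant_on (vanishes_from n) g -> exists g', minorant_on (vanishes_from n.+1) g'.
Proof.
move=> Hn Hg; pose e : 'I_d := Ordinal Hn.
have zero_vanishes : vanishes_from n (fun _ : 'I_d => 0) by [].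
pose lower z := exists m s, vanishes_from n m /\ 0 < s /\
  z = (dotd g m - q (fun k => m k - s * basis_blk e k)) / s.
have Hbound : bound lower.
  exists (q (fun k => 0 + 1 * basis_blk e k) - dotd g (fun _ => 0)) => z [m [s [Hm [Hs ->]]]].
  have := minorant_slopes_le e Hg zero_vanishes Hm Hs Rlt_0_1 => h.
  apply: (Rmult_le_reg_r s) => //; rewrite /Rdiv Rmult_assoc Rinv_l; lra.
have Hne : exists z, lower z.
  by eexists; exists (fun _ => 0), 1; split => //; split => //; lra.
have [c [Hc1 Hc2]] := completeness lower Hbound Hne.
exists (fun k => if k == e then c else g k); apply: (minorant_extend_with (e := e)) => //.
- by move=> m s Hm Hs; apply: Hc1; exists m, s.
- move=> m t Hm Ht; apply: Hc2 => z [m' [s [Hm' [Hs ->]]]].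
  have := minorant_slopes_le e Hg Hm Hm' Hs Ht => h.
  apply: (Rmult_le_reg_r (s * t)); first nra.
  have -> : (dotd g m' - q (fun k => m' k - s * basis_blk e k)) / s * (s * t) =
    t * (dotd g m' - q (fun k => m' k - s * basis_blk e k)) by field; lra.
  have -> : (q (fun k => m k + t * basis_blk e k) - dotd g m) / t * (s * t) =
    s * (q (fun k => m k + t * basis_blk e k) - dotd g m) by field; lra.
  done.
Qed.

Lemma linear_minorant_exists : exists g, forall v, dotd g v <= q v.
Proof.
suff [g Hg] : exists g, minorant_on (vanishes_from d) g.
  by exists g => v; apply: Hg => k Hk; have := ltn_ord k; lia.
suff H n : (n <= d)%nat -> exists g, minorant_on (vanishes_from n) g by apply: H.
elim: n => [_|n IH Hn].
  exists (fun _ => 0) => v Hv.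
  rewrite (blk_congr q (v := fun _ => 0)) ?q0; last by move=> k; apply: Hv.
  by rewrite /dotd big1; [lra | move=> k _; ring].
have [g Hg] := IH (ltnW Hn).
exact: minorant_extend Hn Hg.
Qed.
End LinearMinorant.

Lemma convex_subgradient_exists d (r : blk d -> R) (x : blk d) :
  convex_fun r -> exists g, is_subgradient r x g.
Proof.
move=> Hr; pose q (v : blk d) := r (fun k => x k + v k) - r x.
have q0 : q (fun _ => 0) = 0 by rewrite /q (blk_congr r (v := x)); [ring | move=> k; ring].
have q_convex : convex_fun q.
  move=> u w a Ha; rewrite /q.
  have := Hr (fun k => x k + u k) (fun k => x k + w k) a Ha.
  rewrite (blk_congr r (u := addd _ _) (v := fun k => x k + addd (scald a u) (scald (1 - a) w) k)).
    lra.
  by move=> k; rewrite /addd /scald; ring.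
have [g Hg] := linear_minorant_exists q0 q_convex.
exists g => w; have := Hg (subd w x); rewrite /q.
by rewrite (blk_congr r (v := w)); [lra | move=> k; rewrite /subd; ring].
Qed.

(** * Strongly convex surrogates *)

Lemma normd_scale d (w : blk d) a : 0 <= a -> normd (fun k => a * w k) = a * normd w.
Proof.
move=> Ha; rewrite /normd /dotd.
rewrite (eq_bigr (fun k => (a * a) * (w k * w k))); last by move=> k _; ring.
by rewrite -bigR_mulr sqrt_mult ?sqrt_square //; [nra | apply: dotd_ge0].
Qed.

Lemma dotd_scale_r d (g w : blk d) a : dotd g (fun k => a * w k) = a * dotd g w.
Proof. by rewrite /dotd bigR_mulr; apply: eq_bigr => k _; ring. Qed.

Lemma small_factor_exists p q delta e : 0 <= p -> 0 <= q -> 0 < delta -> 0 < e ->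
  exists a, 0 < a <= 1 /\ a * p < delta /\ a * q <= e.
Proof.
move=> Hp Hq Hdelta He.
exists (Rmin 1 (Rmin (delta / (p + 1)) (e / (q + 1)))).
have H1 := Rmin_l 1 (Rmin (delta / (p + 1)) (e / (q + 1))).
have H2 := Rle_trans _ _ _ (Rmin_r 1 _) (Rmin_l (delta / (p + 1)) (e / (q + 1))).
have H3 := Rle_trans _ _ _ (Rmin_r 1 _) (Rmin_r (delta / (p + 1)) (e / (q + 1))).
have Hpos : 0 < Rmin 1 (Rmin (delta / (p + 1)) (e / (q + 1))).
  by apply: Rmin_pos; [lra | apply: Rmin_pos; apply: Rdiv_lt_0_compat; lra].
move: H1 H2 H3 Hpos; set a := Rmin _ _ => H1 H2 H3 Hpos.
have Hd : delta / (p + 1) * (p + 1) = delta by field; lra.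
have He' : e / (q + 1) * (q + 1) = e by field; lra.
have : a * (p + 1) <= delta by rewrite -Hd; apply: Rmult_le_compat_r; lra.
have : a * (q + 1) <= e by rewrite -He'; apply: Rmult_le_compat_r; lra.
split; [lra | split; nra].
Qed.

Lemma strongly_convex_first_order d (S : blk d -> Prop) tau (h : blk d -> R)
  (gh : blk d -> blk d) u v :
  0 <= tau -> has_gradient_at dotd subd h gh v -> strongly_convex_on S tau h -> S u -> S v ->
  h v + dotd (gh v) (subd u v) + tau / 2 * normd (subd u v) ^ 2 <= h u.
Proof.
move=> Htau Hgrad Hsc Su Sv.
set w := subd u v; set rho := normd w.
have rho0 : 0 <= rho := normd_ge0 w.
have rho2 : 0 <= tau * rho ^ 2 by apply: Rmult_le_pos => //; apply: pow2_ge_0.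
apply: le_epsilon => e He.
set eps := e / (2 * (rho + 1)).
have Heps : 0 < eps by apply: Rdiv_lt_0_compat; lra.
have Heps_rho : eps * rho <= e / 2.
  have -> : eps * rho = e / 2 * (rho / (rho + 1)) by rewrite /eps; field; lra.
  have : rho / (rho + 1) <= 1.
    by apply: (Rmult_le_reg_r (rho + 1)); [lra | rewrite /Rdiv Rmult_assoc Rinv_l; lra].
  have : 0 <= e / 2 by lra.
  nra.
have [delta [Hdelta Hnear]] := Hgrad eps Heps.
have [a [Ha [Ha_delta Ha_tau]]] := small_factor_exists rho0 rho2 Hdelta He.
set y := addd (scald a u) (scald (1 - a) v).
have Hyv : subd y v = (fun k => a * w k).
  by apply: functional_extensionality => k; rewrite /y /addd /scald /w /subd; ring.
have Hgr : normd (subd y v) < delta ->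
    Rabs (h y - h v - dotd (gh v) (subd y v)) <= eps * normd (subd y v) := Hnear y.
rewrite Hyv normd_scale ?dotd_scale_r -/rho in Hgr; last lra.
have {}Hgr := Hgr Ha_delta.
have Hsc1 := Hsc u v a Su Sv (ltac:(lra)); rewrite -/y -/w -/rho in Hsc1.
have Hlin : h y - h v >= a * dotd (gh v) w - eps * (a * rho).
  by have := Rle_abs (- (h y - h v - a * dotd (gh v) w)); rewrite Rabs_Ropp; lra.
apply: (Rmult_le_reg_l a); first lra.
have : a * (eps * rho) <= a * (e / 2) by apply: Rmult_le_compat_l; lra.
have : a * (a * (tau * rho ^ 2)) <= a * e by apply: Rmult_le_compat_l; lra.
nra.
Qed.

Lemma dotd_add_l d (g g' w : blk d) : dotd (fun k => g k + g' k) w = dotd g w + dotd g' w.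
Proof. by rewrite /dotd -big_split; apply: eq_bigr => k _ /=; ring. Qed.

Lemma dotd_ge_neg_norm d (g w : blk d) : - (normd g * normd w) <= dotd g w.
Proof. by have := cauchy_schwarz g w; have := Rle_abs (- dotd g w); rewrite Rabs_Ropp; lra. Qed.

Lemma strongly_convex_argmin_dist d (S : blk d -> Prop) tau (h : blk d -> R)
  (gh : blk d -> blk d) (rl : blk d -> R) Mr (c u v : blk d) :
  0 < tau -> has_gradient_at dotd subd h gh v -> strongly_convex_on S tau h ->
  convex_fun rl -> (forall g, is_subgradient rl v g -> normd g <= Mr) -> S u -> S v ->
  h u + dotd c (subd u v) + rl u <= h v + rl v ->
  normd (subd u v) <= 2 * (normd (fun k => gh v k + c k) + Mr) / tau.
Proof.
move=> Htau Hgrad Hsc Hrl HMr Su Sv Hopt.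
set w := subd u v; set rho := normd w; set G := normd (fun k => gh v k + c k).
have rho0 : 0 <= rho := normd_ge0 w.
have [g Hg] := convex_subgradient_exists v Hrl.
have Hr : rl v - Mr * rho <= rl u.
  have := Hg u; have := dotd_ge_neg_norm g w; have := HMr g Hg.
  have := normd_ge0 g; rewrite -/w -/rho; nra.
have Hh := strongly_convex_first_order (Rlt_le _ _ Htau) Hgrad Hsc Su Sv.
have HG := dotd_ge_neg_norm (fun k => gh v k + c k) w; rewrite dotd_add_l -/rho -/G in HG.
have Hq : tau / 2 * rho ^ 2 <= (G + Mr) * rho by rewrite -/w -/rho in Hh Hopt; lra.
have HG0 : 0 <= G + Mr.
  by apply: Rplus_le_le_0_compat; [apply: normd_ge0 | apply: Rle_trans (normd_ge0 g) (HMr g Hg)].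
case: (Req_dec rho 0) => [-> | Hrho].
  by apply: Rmult_le_pos; [lra | apply: Rlt_le; apply: Rinv_0_lt_compat].
apply: (Rmult_le_reg_r tau) => //; rewrite /Rdiv Rmult_assoc Rinv_l; last lra.
apply: (Rmult_le_reg_r rho); first lra.
nra.
Qed.

Lemma finite_bound_R (I : finType) (P : I -> R -> Prop) :
  (forall i M M', M <= M' -> P i M -> P i M') -> (forall i, exists M, P i M) ->
  exists M, 0 <= M /\ forall i, P i M.
Proof.
move=> Hmono Hex.
suff [M [HM0 HM]] : exists M, 0 <= M /\ forall i, i \in enum I -> P i M.
  by exists M; split => // i; apply: HM; rewrite mem_enum.
elim: (enum I) => [|a s [M [HM0 HM]]]; first by exists 0; split; [lra|].
have [Ma HMa] := Hex a.
exists (Rmax Ma M); split; first by apply: Rle_trans HM0 (Rmax_r _ _).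
move=> i; rewrite inE => /orP [/eqP ->|Hi]; first by apply: Hmono HMa; apply: Rmax_l.
by apply: Hmono (HM i Hi); apply: Rmax_r.
Qed.

Lemma finite_bound_nat (I : finType) (P : I -> nat -> Prop) :
  (forall i M M', (M <= M')%nat -> P i M -> P i M') -> (forall i, exists M, P i M) ->
  exists M, forall i, P i M.
Proof.
move=> Hmono Hex.
suff [M HM] : exists M, forall i, i \in enum I -> P i M.
  by exists M => i; apply: HM; rewrite mem_enum.
elim: (enum I) => [|a s [M HM]]; first by exists 0%nat.
have [Ma HMa] := Hex a.
exists (maxn Ma M) => i; rewrite inE => /orP [/eqP ->|Hi].
  by apply: Hmono HMa; apply: leq_maxl.
by apply: Hmono (HM i Hi); apply: leq_maxr.
Qed.

Definition fmax (I : finType) (i0 : I) (f : I -> R) : R :=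
  foldr (fun i m => Rmax (f i) m) (f i0) (enum I).
Definition fmin (I : finType) (i0 : I) (f : I -> R) : R := - fmax i0 (fun i => - f i).

Lemma fmax_ge (I : finType) (i0 : I) (f : I -> R) i : f i <= fmax i0 f.
Proof.
rewrite /fmax; have : i \in enum I by rewrite mem_enum.
elim: (enum I) => [//|a s IH]; rewrite inE => /orP [/eqP ->|Hi] /=; first exact: Rmax_l.
by apply: Rle_trans (IH Hi) _; apply: Rmax_r.
Qed.

Lemma fmax_attained (I : finType) (i0 : I) (f : I -> R) : exists j, fmax i0 f = f j.
Proof.
rewrite /fmax; elim: (enum I) => [|a s [j Hj]] /=; first by exists i0.
rewrite Hj; case: (Rle_dec (f a) (f j)) => h; first by exists j; rewrite Rmax_right.
by exists a; rewrite Rmax_left //; lra.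
Qed.

Lemma fmin_le (I : finType) (i0 : I) (f : I -> R) i : fmin i0 f <= f i.
Proof. by rewrite /fmin; have := fmax_ge i0 (fun i => - f i) i; lra. Qed.

Lemma fmin_attained (I : finType) (i0 : I) (f : I -> R) : exists j, fmin i0 f = f j.
Proof. by have [j Hj] := fmax_attained i0 (fun i => - f i); exists j; rewrite /fmin Hj; ring. Qed.

(** * Information flow in the time-varying graphs *)

Section Propagation.
Variables (N B : nat) (E : rel 'I_N) (sel : nat -> 'I_N -> 'I_B) (l : 'I_B) (T : nat).
Hypothesis HE : strongly_connected E.
Hypothesis HT : forall i t, exists tau, (tau < T)%nat /\ sel (t + tau)%nat i = l.

Lemma inNil_self s i : inNil E sel s i l i.
Proof. by rewrite /inNil eqxx orbT. Qed.

(* Each agent keeps its own value, and an edge j -> i carries block l within T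
   steps since j selects l at least once in every window of length T; following
   a shortest path, everything is reached after N * T steps. *)
Lemma propagates_everywhere t j0 (Q : nat -> 'I_N -> Prop) :
  Q t j0 ->
  (forall s i j, (t <= s)%nat -> Q s j -> inNil E sel s i l j -> Q s.+1 i) ->
  forall i, Q (t + N * T)%nat i.
Proof.
move=> Q0 Hstep.
have persist k s i : (t <= s)%nat -> Q s i -> Q (s + k)%nat i.
  elim: k s => [s _ H|k IH s Hs H]; first by rewrite addn0.
  rewrite addnS; apply: (Hstep _ _ i); [lia | exact: IH | exact: inNil_self].
have along_edge s i j : (t <= s)%nat -> Q s j -> E j i -> Q (s + T)%nat i.
  move=> Hs Hj Eji; have [tau [Htau Hsel]] := HT j s.
  have H2 : Q (s + tau).+1 i.
    apply: (Hstep _ _ j); [lia | exact: persist | by rewrite /inNil Eji Hsel eqxx].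
  have -> : (s + T = (s + tau).+1 + (T - tau.+1))%nat by lia.
  by apply: persist => //; lia.
have along_path p j s : (t <= s)%nat -> Q s j -> path E j p -> Q (s + size p * T)%nat (last j p).
  elim: p j s => [|a p IH] j s Hs Hj /=; first by rewrite mul0n addn0.
  move=> /andP [Eja Hp].
  by have := IH a (s + T)%nat (ltac:(lia)) (along_edge _ _ _ Hs Hj Eja) Hp; rewrite mulSn addnA.
move=> i; have /connectP [p Hp ->] := HE j0 i.
case: (shortenP Hp) => p' Hp' Hu _.
have Hsz : (size p' < N)%nat.
  have := uniq_leq_size (s2 := enum 'I_N) Hu (fun x _ => mem_enum _ x).
  by rewrite size_enum_ord.
have := along_path p' j0 t (leqnn t) Q0 Hp'.
have -> : (t + N * T = (t + size p' * T) + (N - size p') * T)%nat.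
  by rewrite -addnA -mulnDl subnKC // ltnW.
by move=> H; apply: persist => //; lia.
Qed.
End Propagation.

(** * Perturbed consensus *)

Lemma bigR_convex_sub (I : finType) (P : pred I) (w v : I -> R) c :
  \big[Rplus/0]_(j | P j) w j = 1 ->
  \big[Rplus/0]_(j | P j) (w j * v j) - c = \big[Rplus/0]_(j | P j) (w j * (v j - c)).
Proof.
move=> H1; rewrite [RHS](eq_bigr (fun j => w j * v j - w j * c)); last by move=> j _; ring.
by rewrite bigR_sub -bigR_mull H1 Rmult_1_l.
Qed.

Section PerturbedConsensus.
Variables (N : nat) (i0 : 'I_N) (P : nat -> 'I_N -> 'I_N -> bool)
  (w : nat -> 'I_N -> 'I_N -> R) (v e : nat -> 'I_N -> R) (eb : nat -> R) (eps : R) (T0 : nat).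
Hypothesis w_sum1 : forall s i, \big[Rplus/0]_(j | P s i j) w s i j = 1.
Hypothesis w_ge_eps : forall s i j, P s i j -> eps <= w s i j.
Hypothesis eps_01 : 0 < eps <= 1.
Hypothesis v_step : forall s i,
  v s.+1 i = \big[Rplus/0]_(j | P s i j) (w s i j * (v s j + e s j)).
Hypothesis e_bound : forall s j, Rabs (e s j) <= eb s.
Hypothesis propagation : forall t j0 (Q : nat -> 'I_N -> Prop), Q t j0 ->
  (forall s i j, (t <= s)%nat -> Q s j -> P s i j -> Q s.+1 i) -> forall i, Q (t + T0)%nat i.

Definition vmax s := fmax i0 (v s).
Definition vmin s := fmin i0 (v s).
Definition spread s := vmax s - vmin s.

Lemma Rabs_sub_le_spread s i j : Rabs (v s i - v s j) <= spread s.
Proof.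
rewrite /spread /vmax /vmin; apply: Rabs_le.
by have := fmax_ge i0 (v s) i; have := fmax_ge i0 (v s) j;
   have := fmin_le i0 (v s) i; have := fmin_le i0 (v s) j; lra.
Qed.

Lemma spread_ge0 s : 0 <= spread s.
Proof. by have := Rabs_sub_le_spread s i0 i0; have := Rabs_pos (v s i0 - v s i0); lra. Qed.

Lemma w_ge0 s i j : P s i j -> 0 <= w s i j.
Proof. by move=> H; have := w_ge_eps H; lra. Qed.

Lemma vmax_step s : vmax s.+1 <= vmax s + eb s.
Proof.
rewrite {1}/vmax; have [j ->] := fmax_attained i0 (v s.+1); rewrite v_step.
apply: bigR_convex_le => [k /w_ge0 // | // | k _].
by have := fmax_ge i0 (v s) k; have := Rle_abs (e s k); have := e_bound s k; rewrite /vmax; lra.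
Qed.

Lemma vmin_step s : vmin s - eb s <= vmin s.+1.
Proof.
rewrite {2}/vmin; have [j ->] := fmin_attained i0 (v s.+1); rewrite v_step.
apply: bigR_convex_ge => [k /w_ge0 // | // | k _].
have := fmin_le i0 (v s) k; have := Rle_abs (- e s k); have := e_bound s k.
by rewrite Rabs_Ropp /vmin; lra.
Qed.

Lemma spread_step s : spread s.+1 <= spread s + 2 * eb s.
Proof. by have := vmax_step s; have := vmin_step s; rewrite /spread; lra. Qed.

Definition drift t k := \big[Rplus/0]_(u < k) eb (t + u)%nat.

Lemma drift_S t k : drift t k.+1 = drift t k + eb (t + k)%nat.
Proof. by rewrite /drift big_ord_recr. Qed.

Lemma vmax_drift t k : vmax (t + k)%nat <= vmax t + drift t k.
Proof.
elim: k => [|k IH]; first by rewrite addn0 /drift big_ord0; lra.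
by rewrite addnS drift_S; have := vmax_step (t + k); lra.
Qed.

Lemma vmin_drift t k : vmin t - drift t k <= vmin (t + k)%nat.
Proof.
elim: k => [|k IH]; first by rewrite addn0 /drift big_ord0; lra.
by rewrite addnS drift_S; have := vmin_step (t + k); lra.
Qed.

(* The excess of v over the drifting lower bound [vmin t - drift t k] is
   passed on with a factor at least eps along every edge used at step t + k. *)
Lemma excess_step t k i j : P (t + k)%nat i j ->
  eps ^ k * spread t <= v (t + k)%nat j - (vmin t - drift t k) ->
  eps ^ k.+1 * spread t <= v (t + k).+1 i - (vmin t - drift t k.+1).
Proof.
move=> Pij Hj.
have excess_ge0 j1 :
    0 <= v (t + k)%nat j1 + e (t + k)%nat j1 - (vmin t - drift t k - eb (t + k)%nat).
  have := vmin_drift t k; have := fmin_le i0 (v (t + k)%nat) j1.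
  have := Rle_abs (- e (t + k)%nat j1); have := e_bound (t + k)%nat j1.
  by rewrite Rabs_Ropp /vmin; lra.
rewrite v_step drift_S.
have -> : vmin t - (drift t k + eb (t + k)%nat) = vmin t - drift t k - eb (t + k)%nat by ring.
rewrite bigR_convex_sub //.
apply: Rle_trans (bigR_term_le _ Pij); last first.
  by move=> j1 Pj1; apply: Rmult_le_pos; [exact: w_ge0 | exact: excess_ge0].
have := w_ge_eps Pij; have := excess_ge0 j; have := pow_le eps k (ltac:(lra)).
have := spread_ge0 t; have := Rle_abs (- e (t + k)%nat j); have := e_bound (t + k)%nat j.
rewrite Rabs_Ropp /=; nra.
Qed.

Lemma spread_contracts t : spread (t + T0)%nat <= (1 - eps ^ T0) * spread t + 2 * drift t T0.
Proof.
have [j0 Hj0] := fmax_attained i0 (v t).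
pose Q s i := exists k, s = (t + k)%nat /\ eps ^ k * spread t <= v s i - (vmin t - drift t k).
have Q0 : Q t j0.
  by exists 0%nat; rewrite addn0 /drift big_ord0 -Hj0 /spread /vmax /=; split => //; lra.
have [imin Himin] := fmin_attained i0 (v (t + T0)%nat).
have [k [Hk Hq]] : Q (t + T0)%nat imin.
  apply: (propagation Q0) => s i j _ [k [-> Hk]] Pij.
  by exists k.+1; split; [rewrite addnS | exact: excess_step Pij Hk].
have HkT0 : k = T0 by lia.
rewrite HkT0 -Himin -/(vmin _) in Hq.
have : spread (t + T0)%nat = vmax (t + T0)%nat - vmin (t + T0)%nat by [].
have : spread t = vmax t - vmin t by [].
by have := vmax_drift t T0; lra.
Qed.
End PerturbedConsensus.

(** * Series with nonnegative terms *)

Definition summable (u : nat -> R) := exists s, Un_cv (psum u) s.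

Lemma psum_S u n : psum u n.+1 = psum u n + u n.+1.
Proof. by []. Qed.

Lemma psum_le (u v : nat -> R) n : (forall t, u t <= v t) -> psum u n <= psum v n.
Proof.
move=> H; elim: n => [|n IH]; first exact: H.
by rewrite !psum_S; have := H n.+1; lra.
Qed.

Lemma psum_ge0 (u : nat -> R) n : (forall t, 0 <= u t) -> 0 <= psum u n.
Proof. by move=> H; apply: Rle_trans (psum_le n H); elim: n => [|n IH] //=; lra. Qed.

Lemma psum_mono (u : nat -> R) m n :
  (forall t, 0 <= u t) -> (m <= n)%nat -> psum u m <= psum u n.
Proof.
move=> H /subnK <-; elim: (n - m)%nat => [|k IH]; first by rewrite add0n; lra.
by rewrite addSn psum_S; have := H (k + m).+1; lra.
Qed.

Lemma psum_scal c (u : nat -> R) n : psum (fun t => c * u t) n = c * psum u n.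
Proof. by elim: n => [|n IH] //; rewrite !psum_S IH; ring. Qed.

Lemma psum_add (u v : nat -> R) n : psum (fun t => u t + v t) n = psum u n + psum v n.
Proof. by elim: n => [|n IH] //; rewrite !psum_S IH; ring. Qed.

Lemma psum_shift (u : nat -> R) P m :
  psum u (m + P.+1)%nat = psum u P + psum (fun t => u (t + P.+1)%nat) m.
Proof.
elim: m => [|m IH]; first by rewrite add0n psum_S.
by rewrite addSn psum_S IH psum_S /= addSn; ring.
Qed.

Lemma summable_of_bounded (u : nat -> R) M :
  (forall t, 0 <= u t) -> (forall n, psum u n <= M) -> summable u.
Proof.
move=> H HM.
have Hgrow : Un_growing (psum u) by move=> n; rewrite psum_S; have := H n.+1; lra.
have Hub : has_ub (psum u) by exists M => _ [n ->].
by have [s Hs] := growing_cv (psum u) Hgrow Hub; exists s.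
Qed.

Lemma psum_le_lim (u : nat -> R) s n :
  (forall t, 0 <= u t) -> Un_cv (psum u) s -> psum u n <= s.
Proof.
move=> H Hs; apply: growing_ineq => // m.
by rewrite psum_S; have := H m.+1; lra.
Qed.

Lemma summable_le (u v : nat -> R) :
  (forall t, 0 <= u t) -> (forall t, u t <= v t) -> summable v -> summable u.
Proof.
move=> H Huv [s Hs]; apply: (summable_of_bounded (M := s)) => // n.
have Hv t : 0 <= v t by have := H t; have := Huv t; lra.
exact: Rle_trans (psum_le n Huv) (psum_le_lim n Hv Hs).
Qed.

Lemma summable_scal c (u : nat -> R) :
  0 <= c -> (forall t, 0 <= u t) -> summable u -> summable (fun t => c * u t).
Proof.
move=> Hc Hu [s Hs]; apply: (summable_of_bounded (M := c * s)).
  by move=> t; apply: Rmult_le_pos.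
by move=> n; rewrite psum_scal; apply: Rmult_le_compat_l => //; apply: psum_le_lim.
Qed.

Lemma summable_cv0 (u : nat -> R) : summable u -> Un_cv u 0.
Proof.
move=> [s Hs] eps Heps.
have [N0 HN0] := Hs (eps / 2) (ltac:(lra)).
exists N0.+1 => n Hn.
have h1 := HN0 n (ltac:(lia)); have h2 := HN0 n.-1 (ltac:(lia)).
have Hn1 : n = n.-1.+1 by lia.
rewrite /R_dist Hn1 psum_S in h1 *; rewrite Rminus_0_r.
have := Rabs_triang (psum u n.-1 + u n.-1.+1 - s) (- (psum u n.-1 - s)).
rewrite Rabs_Ropp.
have -> : psum u n.-1 + u n.-1.+1 - s + - (psum u n.-1 - s) = u n.-1.+1 by ring.
rewrite /R_dist in h2; lra.
Qed.

Lemma summable_window_contraction (f g : nat -> R) T0 rho :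
  (0 < T0)%nat -> 0 < rho <= 1 -> (forall t, 0 <= f t) -> (forall t, 0 <= g t) ->
  summable g -> (forall t, f (t + T0)%nat <= (1 - rho) * f t + g t) -> summable f.
Proof.
case: T0 => [//|P] _ Hrho Hf Hg [G HG] Hrec.
have {}HG n : psum g n <= G := psum_le_lim n Hg HG.
have HP0 : 0 <= psum f P by apply: psum_ge0.
apply: (summable_of_bounded (M := (psum f P + G) / rho)) => // n.
have Hshift m : psum f (m + P.+1) <= (psum f P + G) / rho.
  have H1 : psum (fun t => f (t + P.+1)%nat) m <= (1 - rho) * psum f m + psum g m.
    by rewrite -psum_scal -psum_add; apply: psum_le.
  have H2 : psum f m <= psum f (m + P.+1) by apply: psum_mono => //; lia.
  rewrite psum_shift in H2 *.
  have H3 : (1 - rho) * psum f m <= (1 - rho) * (psum f P + psum (fun t => f (t + P.+1)%nat) m).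
    by apply: Rmult_le_compat_l; lra.
  apply: (Rmult_le_reg_r rho); first lra.
  rewrite /Rdiv Rmult_assoc Rinv_l; last lra.
  have := HG m; nra.
case: (leqP P.+1 n) => Hn; first by have := Hshift (n - P.+1)%nat; rewrite subnK.
apply: Rle_trans (_ : psum f (0 + P.+1) <= _); last exact: Hshift.
by apply: psum_mono => //; lia.
Qed.

Lemma nonincreasing_add (gamma : nat -> R) :
  (forall t, gamma t.+1 <= gamma t) -> forall t u, gamma (t + u)%nat <= gamma t.
Proof.
move=> H t; elim=> [|u IH]; first by rewrite addn0; lra.
by rewrite addnS; apply: Rle_trans (H _) IH.
Qed.

Lemma sq_convex_le A b rho :
  0 < rho <= 1 -> ((1 - rho) * A + b) ^ 2 <= (1 - rho) * A ^ 2 + b ^ 2 / rho.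
Proof.
move=> Hrho; apply: (Rmult_le_reg_l rho); first lra.
have -> : rho * ((1 - rho) * A ^ 2 + b ^ 2 / rho) = rho * ((1 - rho) * A + b) ^ 2
    + (1 - rho) * (rho * A - b) ^ 2 by field; lra.
have : 0 <= (1 - rho) * (rho * A - b) ^ 2 by apply: Rmult_le_pos; [lra | apply: pow2_ge_0].
lra.
Qed.

Lemma window_contraction_summable (D gamma : nat -> R) T0 rho C :
  (0 < T0)%nat -> 0 < rho <= 1 -> 0 <= C -> (forall t, 0 <= D t) ->
  (forall t, 0 < gamma t) -> (forall t, gamma t.+1 <= gamma t) ->
  summable (fun t => gamma t ^ 2) ->
  (forall t, D (t + T0)%nat <= (1 - rho) * D t + C * gamma t) ->
  summable (fun t => gamma t * D t) /\ summable (fun t => D t ^ 2).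
Proof.
move=> HT0 Hrho HC HD Hg Hdec Hg2 Hrec.
have Hg2_ge0 t : 0 <= gamma t ^ 2 by apply: pow2_ge_0.
have HC2 : 0 <= C * C / rho by apply: Rle_mult_inv_pos; [nra | lra].
split.
- apply: (summable_window_contraction (g := fun t => C * gamma t ^ 2) HT0 Hrho).
  + by move=> t; apply: Rmult_le_pos; [have := Hg t; lra | apply: HD].
  + by move=> t; apply: Rmult_le_pos.
  + exact: summable_scal.
  + move=> t; have Hgt := Hg t.
    have h1 : gamma (t + T0)%nat * D (t + T0)%nat <= gamma t * D (t + T0)%nat.
      by apply: Rmult_le_compat_r; [apply: HD | apply: nonincreasing_add].
    have h2 : gamma t * D (t + T0)%nat <= gamma t * ((1 - rho) * D t + C * gamma t).
      by apply: Rmult_le_compat_l; [lra | apply: Hrec].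
    by rewrite /= Rmult_1_r; lra.
- apply: (summable_window_contraction (g := fun t => C * C / rho * gamma t ^ 2) HT0 Hrho).
  + by move=> t; apply: pow2_ge_0.
  + by move=> t; apply: Rmult_le_pos.
  + exact: summable_scal.
  + move=> t; apply: Rle_trans (_ : ((1 - rho) * D t + C * gamma t) ^ 2 <= _).
      by apply: pow_incr; have := Hrec t; have := HD (t + T0)%nat; split.
    apply: Rle_trans (sq_convex_le (D t) (C * gamma t) Hrho) _.
    by right; rewrite /Rdiv; ring.
Qed.

Lemma window_contraction_bounded (D : nat -> R) c c' rho T0 :
  0 < rho <= 1 -> 0 <= c -> 0 <= c' -> 0 <= D 0%nat ->
  (forall s, D s.+1 <= D s + c) -> (forall t, D (t + T0)%nat <= (1 - rho) * D t + c') ->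
  exists M, forall t, D t <= M.
Proof.
move=> Hrho Hc Hc' HD0 Hstep Hwin.
set M := D 0%nat + INR T0 * c + c' / rho.
have Hc'rho : rho * (c' / rho) = c' by field; lra.
have HM : c' <= rho * M.
  have : 0 <= rho * (D 0%nat + INR T0 * c) by apply: Rmult_le_pos; [lra | have := pos_INR T0; nra].
  by rewrite /M; nra.
have Hinit t : (t <= T0)%nat -> D t <= D 0%nat + INR t * c.
  elim: t => [_|t IH Ht]; first by rewrite /=; lra.
  by rewrite S_INR; have := IH (ltnW Ht); have := Hstep t; lra.
exists M; elim/ltn_ind => t IH.
case: (leqP T0 t) => Ht; last first.
  have := Hinit t (ltnW Ht).
  have : INR t * c <= INR T0 * c by apply: Rmult_le_compat_r => //; apply: le_INR; apply/leP; lia.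
  have := pos_INR T0; have : 0 <= c' / rho by apply: Rle_mult_inv_pos; lra.
  by rewrite /M; lra.
case: (posnP T0) => [HT0 | HT0].
  have := Hwin t; rewrite HT0 addn0 => h.
  have : rho * D t <= rho * M by nra.
  by move=> /(Rmult_le_reg_l _ _ _ (proj1 Hrho)).
have <- : ((t - T0) + T0)%nat = t by rewrite subnK.
have := IH (t - T0)%nat (ltac:(lia)); have := Hwin (t - T0)%nat.
have : 0 <= 1 - rho by lra.
nra.
Qed.

Lemma cv0_of_sq_cv0 (u : nat -> R) :
  (forall t, 0 <= u t) -> Un_cv (fun t => u t ^ 2) 0 -> Un_cv u 0.
Proof.
move=> Hu H eps Heps; have [M HM] := H (eps * eps) (ltac:(nra)).
exists M => n Hn; have := HM n Hn; have := Hu n.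
by rewrite /R_dist !Rminus_0_r /= Rmult_1_r !Rabs_pos_eq //; [nra | nra].
Qed.

Lemma bigR_eq0_ge0 (I : eqType) (s : seq I) (P : pred I) (w : I -> R) :
  (forall j, P j -> 0 <= w j) -> \big[Rplus/0]_(j <- s | P j) w j = 0 ->
  forall j, j \in s -> P j -> w j = 0.
Proof.
move=> Hw; elim: s => [|a s IH] //; rewrite big_cons => Hs j.
have Hrest := bigR_ge0 s Hw.
case: (boolP (P a)) => Pa; rewrite ?Pa ?(negbTE Pa) in Hs; rewrite inE => /orP [/eqP ->|Hj] Pj.
- by have := Hw a Pa; lra.
- by apply: IH => //; have := Hw a Pa; lra.
- by rewrite Pj in Pa.
- exact: IH.
Qed.

Lemma convex_set_bigR d (C : blk d -> Prop) (I : eqType) (s : seq I) (P : pred I)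
  (w : I -> R) (p : I -> blk d) :
  convex_set C -> (forall j, P j -> 0 <= w j) ->
  \big[Rplus/0]_(j <- s | P j) w j = 1 -> (forall j, P j -> C (p j)) ->
  C (fun k => \big[Rplus/0]_(j <- s | P j) (w j * p j k)).
Proof.
move=> HC Hw; elim: s w Hw => [|a s IH] w Hw; first by rewrite big_nil; lra.
rewrite big_cons => H1 Hp.
case: (boolP (P a)) => Pa; last first.
  rewrite (negbTE Pa) in H1.
  have -> : (fun k => \big[Rplus/0]_(j <- a :: s | P j) (w j * p j k)) =
      (fun k => \big[Rplus/0]_(j <- s | P j) (w j * p j k)).
    by apply: functional_extensionality => k; rewrite big_cons (negbTE Pa).
  exact: IH.
rewrite Pa in H1.
have -> : (fun k => \big[Rplus/0]_(j <- a :: s | P j) (w j * p j k)) =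
    (fun k => w a * p a k + \big[Rplus/0]_(j <- s | P j) (w j * p j k)).
  by apply: functional_extensionality => k; rewrite big_cons Pa.
set W := \big[Rplus/0]_(j <- s | P j) w j in H1.
have W0 : 0 <= W by apply: bigR_ge0.
have wa := Hw a Pa.
case: (Req_dec W 0) => HW.
  have Hz := bigR_eq0_ge0 Hw HW.
  suff -> : (fun k => w a * p a k + \big[Rplus/0]_(j <- s | P j) (w j * p j k)) = p a.
    exact: Hp.
  apply: functional_extensionality => k; rewrite big_seq_cond big1.
    by rewrite (_ : w a = 1); [ring | lra].
  by move=> j /andP [Hj Pj]; rewrite Hz // Rmult_0_l.
have Hq : C (fun k => \big[Rplus/0]_(j <- s | P j) (w j / W * p j k)).
  apply: IH => //; first by move=> j Pj; apply: Rle_mult_inv_pos; [apply: Hw | lra].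
  by rewrite -bigR_mull /W; field.
suff -> : (fun k => w a * p a k + \big[Rplus/0]_(j <- s | P j) (w j * p j k)) =
    addd (scald (w a) (p a))
      (scald (1 - w a) (fun k => \big[Rplus/0]_(j <- s | P j) (w j / W * p j k))).
  by apply: (HC _ _ _ (Hp a Pa) Hq); lra.
apply: functional_extensionality => k; rewrite /addd /scald (_ : 1 - w a = W); last lra.
by rewrite bigR_mulr; congr (_ + _); apply: eq_bigr => j _; field.
Qed.

Lemma weighted_avg_dist N (p v : 'I_N -> R) D i :
  0 < INR N -> (forall j, 0 <= p j) -> \big[Rplus/0]_j p j = INR N ->
  (forall j, Rabs (v i - v j) <= D) ->
  Rabs (v i - / INR N * \big[Rplus/0]_j (p j * v j)) <= D.
Proof.
move=> HN Hp Hs HD.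
have HN' : 0 < / INR N by apply: Rinv_0_lt_compat.
have -> : v i - / INR N * \big[Rplus/0]_j (p j * v j) =
    / INR N * \big[Rplus/0]_j (p j * (v i - v j)).
  rewrite [X in _ = _ * X](eq_bigr (fun j => p j * v i - p j * v j)); last by move=> j _; ring.
  rewrite bigR_sub -bigR_mull Hs; set S := \big[Rplus/0]_j _; field; lra.
rewrite Rabs_mult Rabs_pos_eq; last lra.
apply: Rle_trans (_ : / INR N * \big[Rplus/0]_j (p j * D) <= _).
  apply: Rmult_le_compat_l; first lra.
  apply: Rle_trans (bigR_abs _ _ _) _; apply: bigR_le => j _.
  by rewrite Rabs_mult Rabs_pos_eq //; apply: Rmult_le_compat_l.
by rewrite -bigR_mull Hs; right; field; lra.
Qed.

(** * The algorithm *)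

Lemma pow_le_one (k : R) n : 0 <= k <= 1 -> k ^ n <= 1.
Proof. by move=> Hk; rewrite -(pow1 n); apply: pow_incr. Qed.

Section Algorithm.
Variables (d B N : nat).
Hypothesis HN : (0 < N)%nat.
Variable K : 'I_B -> blk d -> Prop.
Hypothesis K_convex : forall l, convex_set (K l).
Variable gf : 'I_N -> pt d B -> pt d B.
Hypothesis gf_bounded : forall i, exists M, forall x, inK K x -> normP (gf i x) <= M.
Variable r : 'I_B -> blk d -> R.
Hypothesis r_convex : forall l, convex_fun (r l).
Hypothesis r_subgrad_bounded : forall l, bounded_subgradients_on (K l) (r l).
Variables (E : rel 'I_N) (sel : nat -> 'I_N -> 'I_B) (T : nat).
Hypothesis HE : strongly_connected E.
Hypothesis T_pos : (0 < T)%nat.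
Hypothesis sel_window : forall i t l, exists tau, (tau < T)%nat /\ sel (t + tau)%nat i = l.
Variables (kappa : R) (a : nat -> 'I_B -> 'I_N -> 'I_N -> R).
Hypothesis kappa_pos : 0 < kappa.
Hypothesis a_gt_kappa : forall t l i j, inNil E sel t i l j -> kappa < a t l i j.
Hypothesis a_eq0 : forall t l i j, ~~ inNil E sel t i l j -> a t l i j = 0.
Hypothesis a_col_sum : forall t l j, \big[Rplus/0]_(i < N) a t l i j = 1.
Variables (ft : 'I_N -> 'I_B -> blk d -> pt d B -> R)
  (gft : 'I_N -> 'I_B -> blk d -> pt d B -> blk d) (tau : 'I_N -> R).
Hypothesis tau_pos : forall i, 0 < tau i.
Hypothesis ft_gradient : forall i l x, inK K x ->
  has_gradient_at dotd subd (fun z => ft i l z x) (fun z => gft i l z x) (x l).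
Hypothesis ft_strongly_convex : forall i l x, inK K x ->
  strongly_convex_on (K l) (tau i) (fun z => ft i l z x).
Hypothesis gft_consistent : forall i l x, inK K x -> forall k, gft i l (x l) x k = gf i x l k.
Variable gamma : nat -> R.
Hypothesis gamma_01 : forall t, 0 < gamma t <= 1.
Hypothesis gamma_noninc : forall t, gamma t.+1 <= gamma t.
Hypothesis gamma_sq_summable : summable (fun t => gamma t ^ 2).
Variables (x y : nat -> 'I_N -> pt d B) (phi : nat -> 'I_N -> 'I_B -> R)
  (xt : nat -> 'I_N -> blk d).
Hypothesis x0_inK : forall i, inK K (x 0%nat i).
Hypothesis y0 : forall i l k, y 0%nat i l k = gf i (x 0%nat i) l k.
Hypothesis phi0 : forall i l, phi 0%nat i l = 1.
Hypothesis xt_argmin : forall t i,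
  K (sel t i) (xt t i) /\
  forall z, K (sel t i) z ->
    fhat ft gf i (sel t i) (xt t i) (x t i) (y t i (sel t i)) + r (sel t i) (xt t i)
    <= fhat ft gf i (sel t i) z (x t i) (y t i (sel t i)) + r (sel t i) z.
Hypothesis phi_step : forall t i l,
  phi t.+1 i l = \big[Rplus/0]_(j < N | inNil E sel t i l j) (a t l i j * phi t j l).
Hypothesis x_step : forall t i l k,
  x t.+1 i l k = \big[Rplus/0]_(j < N | inNil E sel t i l j)
    (a t l i j * phi t j l / phi t.+1 i l * (x t j l k + gamma t * dx sel x xt t j l k)).
Hypothesis y_step : forall t i l k,
  y t.+1 i l k = \big[Rplus/0]_(j < N | inNil E sel t i l j)
    (a t l i j / phi t.+1 i l *
       (phi t j l * y t j l k + gf j (x t.+1 j) l k - gf j (x t j) l k)).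

Let i0 : 'I_N := Ordinal HN.

Lemma INR_N_gt0 : 0 < INR N.
Proof. by apply: lt_0_INR; apply/ltP. Qed.

Lemma a_ge0 t l i j : 0 <= a t l i j.
Proof.
case: (boolP (inNil E sel t i l j)) => H; first by have := a_gt_kappa H; lra.
by rewrite a_eq0 //; lra.
Qed.

Lemma kappa_le1 : kappa <= 1.
Proof.
pose l := sel 0%nat i0; have := a_col_sum 0%nat l i0.
have : a 0%nat l i0 i0 <= \big[Rplus/0]_(i < N) a 0%nat l i i0.
  by apply: (@bigR_term_le _ xpredT (fun i => a 0%nat l i i0)) => // i _; apply: a_ge0.
by have := a_gt_kappa (inNil_self E sel l 0%nat i0); lra.
Qed.

Lemma phi_pos t i l : 0 < phi t i l.
Proof.
elim: t i => [|t IH] i; first by rewrite phi0; lra.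
rewrite phi_step; apply: Rlt_le_trans (bigR_term_le _ (inNil_self E sel l t i)).
  by apply: Rmult_lt_0_compat; [have := a_gt_kappa (inNil_self E sel l t i); lra | apply: IH].
by move=> j _; apply: Rmult_le_pos; [apply: a_ge0 | apply: Rlt_le].
Qed.

Lemma phi_step_ge t i l j : inNil E sel t i l j -> kappa * phi t j l <= phi t.+1 i l.
Proof.
move=> Hij; rewrite phi_step; apply: Rle_trans (bigR_term_le _ Hij); last first.
  by move=> j' _; apply: Rmult_le_pos; [apply: a_ge0 | apply: Rlt_le; apply: phi_pos].
apply: Rmult_le_compat_r; first exact: Rlt_le (phi_pos t j l).
exact: Rlt_le (a_gt_kappa Hij).
Qed.

(* Column stochasticity of the weights conserves the total mass of phi. *)
Lemma phi_sum t l : \big[Rplus/0]_(i < N) phi t i l = INR N.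
Proof.
elim: t => [|t IH].
  by rewrite (eq_bigr (fun _ => 1)) ?bigR_const_ord ?Rmult_1_r // => i _; rewrite phi0.
rewrite (eq_bigr (fun i => \big[Rplus/0]_(j < N) (a t l i j * phi t j l))); last first.
  move=> i _; rewrite phi_step big_mkcond; apply: eq_bigr => j _.
  by case: ifP => // /negbT Hj; rewrite a_eq0 // Rmult_0_l.
rewrite exchange_big /= -IH; apply: eq_bigr => j _.
by rewrite -bigR_mull a_col_sum Rmult_1_l.
Qed.

Lemma phi_le_N t i l : phi t i l <= INR N.
Proof.
rewrite -(phi_sum t l).
by apply: (@bigR_term_le _ xpredT (fun i => phi t i l)) => // j _; apply: Rlt_le; apply: phi_pos.
Qed.

Definition phi_min := kappa ^ (N * T).

Lemma phi_min_pos : 0 < phi_min.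
Proof. exact: pow_lt. Qed.

Lemma phi_ge_pow t i l : kappa ^ t <= phi t i l.
Proof.
elim: t i => [|t IH] i; first by rewrite phi0 /=; lra.
apply: Rle_trans (phi_step_ge (inNil_self E sel l t i)) => /=.
by apply: Rmult_le_compat_l; [lra | apply: IH].
Qed.

(* Some agent holds phi >= 1 (the total mass is N), and this mass spreads to
   every agent, losing at most a factor kappa per step, within N * T steps. *)
Lemma phi_ge_min t i l : phi_min <= phi t i l.
Proof.
case: (ltnP t (N * T)) => Ht.
  apply: Rle_trans (phi_ge_pow t i l).
  rewrite /phi_min -(subnK (ltnW Ht)) pow_add.
  have := pow_le_one (N * T - t) (conj (Rlt_le _ _ kappa_pos) kappa_le1).
  by have := pow_le kappa t (Rlt_le _ _ kappa_pos); nra.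
rewrite -(subnK Ht); set t' := (t - N * T)%nat.
have [j0 Hj0] := fmax_attained i0 (fun j => phi t' j l).
have Hj1 : 1 <= phi t' j0 l.
  have : INR N <= INR N * phi t' j0 l.
    rewrite -{1}(phi_sum t' l) -bigR_const_ord; apply: bigR_le => j _.
    by rewrite -Hj0; apply: (fmax_ge i0 (fun j => phi t' j l)).
  by have := INR_N_gt0; nra.
pose Q s i := exists k, s = (t' + k)%nat /\ kappa ^ k * phi t' j0 l <= phi s i l.
have Q0 : Q t' j0 by exists 0%nat; rewrite addn0 /=; split => //; lra.
have [k [Hk Hq]] : Q (t' + N * T)%nat i.
  apply: (propagates_everywhere HE (fun i t => sel_window i t l) Q0) => s i' j _ [k [-> Hq]] Hij.
  exists k.+1; split; first by rewrite addnS.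
  apply: Rle_trans (phi_step_ge Hij) => /=; rewrite Rmult_assoc.
  by apply: Rmult_le_compat_l; [lra | exact: Hq].
apply: Rle_trans Hq; rewrite /phi_min (_ : k = (N * T)%nat); last by lia.
by have := pow_le kappa (N * T) (Rlt_le _ _ kappa_pos); nra.
Qed.

Definition wgt s l i j := a s l i j * phi s j l / phi s.+1 i l.

Lemma wgt_sum s l i : \big[Rplus/0]_(j < N | inNil E sel s i l j) wgt s l i j = 1.
Proof.
rewrite /wgt /Rdiv -bigR_mull -phi_step Rinv_r //.
by have := phi_pos s.+1 i l; lra.
Qed.

Definition wgt_min := kappa * phi_min / INR N.

Lemma wgt_min_pos : 0 < wgt_min <= 1.
Proof.
have HN1 : 1 <= INR N by apply: (le_INR 1); apply/leP.
have := phi_min_pos; have := kappa_le1; have := phi_le_N 0%nat i0 (sel 0%nat i0).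
have := phi_ge_min 0%nat i0 (sel 0%nat i0); rewrite phi0 => h1 h2 h3 h4.
split; first by apply: Rdiv_lt_0_compat; [apply: Rmult_lt_0_compat | apply: INR_N_gt0].
apply: (Rmult_le_reg_r (INR N)); first exact: INR_N_gt0.
by rewrite /wgt_min /Rdiv Rmult_assoc Rinv_l; nra.
Qed.

Lemma wgt_ge_min s l i j : inNil E sel s i l j -> wgt_min <= wgt s l i j.
Proof.
move=> Hij; have Hp := phi_pos s.+1 i l; have Hm := phi_min_pos.
rewrite /wgt_min /wgt /Rdiv.
apply: Rmult_le_compat.
- by apply: Rmult_le_pos; lra.
- by apply: Rlt_le; apply: Rinv_0_lt_compat; apply: INR_N_gt0.
- apply: Rmult_le_compat; [lra | lra | exact: Rlt_le (a_gt_kappa Hij) | exact: phi_ge_min].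
- by apply: Rinv_le_contravar => //; apply: phi_le_N.
Qed.

Lemma wgt_ge0 s l i j : inNil E sel s i l j -> 0 <= wgt s l i j.
Proof. by move=> /wgt_ge_min; have := wgt_min_pos; lra. Qed.

Definition contraction := wgt_min ^ (N * T).

Lemma contraction_pos : 0 < contraction <= 1.
Proof.
have := wgt_min_pos => Hw; split; first by apply: pow_lt; lra.
by apply: pow_le_one; lra.
Qed.

Lemma averaging_spread l (v e : nat -> 'I_N -> R) eb :
  (forall s i, v s.+1 i =
     \big[Rplus/0]_(j < N | inNil E sel s i l j) (wgt s l i j * (v s j + e s j))) ->
  (forall s j, Rabs (e s j) <= eb s) ->
  (forall s, spread i0 v s.+1 <= spread i0 v s + 2 * eb s) /\
  (forall t, spread i0 v (t + N * T)%nat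
     <= (1 - contraction) * spread i0 v t + 2 * drift eb t (N * T)).
Proof.
move=> Hv He; split.
  exact: (spread_step i0 (wgt_sum^~ l) (@wgt_ge_min ^~ l) wgt_min_pos Hv He).
exact: (spread_contracts i0 (wgt_sum^~ l) (@wgt_ge_min ^~ l) wgt_min_pos Hv He
  (propagates_everywhere HE (fun i t => sel_window i t l))).
Qed.

Lemma x_inK t i : inK K (x t i).
Proof.
elim: t i => [|t IH] i; first exact: x0_inK.
move=> l; apply: (blk_set_ext (x_step t i l)).
apply: convex_set_bigR => //; first exact: wgt_ge0.
  exact: wgt_sum.
move=> j _; rewrite /dx; case: eqP => [Hl | _].
- have Hxt : K l (xt t j) by rewrite Hl; case: (xt_argmin t j).
  have Hg := gamma_01 t.
  apply: (blk_set_ext _ (K_convex Hxt (IH j l) (ltac:(lra) : 0 <= gamma t <= 1))) => k.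
  by rewrite /addd /scald /subd; ring.
- by apply: (blk_set_ext _ (IH j l)) => k; ring.
Qed.

Lemma y_tracks_gradient t l k :
  \big[Rplus/0]_(i < N) (phi t i l * y t i l k) = \big[Rplus/0]_(i < N) gf i (x t i) l k.
Proof.
elim: t => [|t IH]; first by apply: eq_bigr => i _; rewrite phi0 y0; ring.
pose z j := phi t j l * y t j l k + gf j (x t.+1 j) l k - gf j (x t j) l k.
rewrite (eq_bigr (fun i => \big[Rplus/0]_(j < N) (a t l i j * z j))); last first.
  move=> i _; rewrite y_step bigR_mulr big_mkcond; apply: eq_bigr => j _.
  case: ifP => [_ | /negbT Hj]; last by rewrite a_eq0 // Rmult_0_l.
  by rewrite /z; field; have := phi_pos t.+1 i l; lra.
rewrite exchange_big /= (eq_bigr z); last by move=> j _; rewrite -bigR_mull a_col_sum Rmult_1_l.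
rewrite /z (eq_bigr (fun j => (phi t j l * y t j l k - gf j (x t j) l k) + gf j (x t.+1 j) l k));
  last by move=> j _; ring.
by rewrite big_split bigR_sub IH /=; ring.
Qed.

Lemma gf_uniform_bound : exists G, 0 <= G /\ forall i z, inK K z -> normP (gf i z) <= G.
Proof.
apply: finite_bound_R gf_bounded => i M M' HM H z Hz.
exact: Rle_trans (H z Hz) HM.
Qed.

Lemma y_spread_bounded l k : exists M, forall t, spread i0 (fun s i => y s i l k) t <= M.
Proof.
have [G [HG0 HG]] := gf_uniform_bound.
have gf_abs s j : Rabs (gf j (x s j) l k) <= G.
  exact: Rle_trans (Rabs_le_normP _ _ _) (HG j _ (x_inK s j)).
pose e s j := (gf j (x s.+1 j) l k - gf j (x s j) l k) / phi s j l.
pose c := 2 * G / phi_min.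
have Hc : 0 <= c by apply: Rle_mult_inv_pos; [lra | apply: phi_min_pos].
have He s j : Rabs (e s j) <= c.
  have Hp := phi_pos s j l; have := phi_min_pos => Hm.
  rewrite /e /c /Rdiv Rabs_mult (Rabs_pos_eq (/ _)); last exact: Rlt_le (Rinv_0_lt_compat _ Hp).
  apply: Rmult_le_compat; [exact: Rabs_pos | exact: Rlt_le (Rinv_0_lt_compat _ Hp) | |].
    apply: Rle_trans (Rabs_triang _ _) _; rewrite Rabs_Ropp.
    by have := gf_abs s.+1 j; have := gf_abs s j; lra.
  by apply: Rinv_le_contravar => //; apply: phi_ge_min.
have Hv s i : y s.+1 i l k =
    \big[Rplus/0]_(j < N | inNil E sel s i l j) (wgt s l i j * (y s j l k + e s j)).
  rewrite y_step; apply: eq_bigr => j _; rewrite /wgt /e.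
  by field; split; [have := phi_pos s j l | have := phi_pos s.+1 i l]; lra.
have [Hstep Hwin] := averaging_spread Hv He.
apply: (window_contraction_bounded (c := 2 * c) (c' := 2 * (INR (N * T) * c))
  (T0 := (N * T)%nat) contraction_pos).
- lra.
- by have := pos_INR (N * T); nra.
- exact: spread_ge0.
- exact: Hstep.
- by move=> t; have := Hwin t; rewrite /drift /= bigR_const_ord.
Qed.

Lemma y_bounded : exists Ky, forall t i l k, Rabs (y t i l k) <= Ky.
Proof.
have [G [HG0 HG]] := gf_uniform_bound.
have [M [_ HM]] : exists M, 0 <= M /\ forall (lk : 'I_B * 'I_d) t,
    spread i0 (fun s i => y s i lk.1 lk.2) t <= M.
  apply: finite_bound_R => [lk M M' HMM H t | [l k]]; first exact: Rle_trans (H t) HMM.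
  exact: y_spread_bounded.
exists (M + G) => t i l k.
set avg := / INR N * \big[Rplus/0]_(j < N) gf j (x t j) l k.
have Hdist : Rabs (y t i l k - avg) <= M.
  rewrite /avg -y_tracks_gradient.
  apply: weighted_avg_dist INR_N_gt0 _ (phi_sum t l) _ => [j | j].
    exact: Rlt_le (phi_pos t j l).
  exact: Rle_trans (Rabs_sub_le_spread i0 (fun s i => y s i l k) t i j) (HM (l, k) t).
have Havg : Rabs avg <= G.
  have HN' := Rinv_0_lt_compat _ INR_N_gt0.
  rewrite /avg Rabs_mult Rabs_pos_eq; last lra.
  apply: Rle_trans (_ : / INR N * \big[Rplus/0]_(j < N) G <= _).
    apply: Rmult_le_compat_l; first lra.
    apply: Rle_trans (bigR_abs _ _ _) _; apply: bigR_le => j _.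
    exact: Rle_trans (Rabs_le_normP _ _ _) (HG j _ (x_inK t j)).
  by rewrite bigR_const_ord; right; field; have := INR_N_gt0; lra.
have := Rabs_triang (y t i l k - avg) avg.
by rewrite (_ : y t i l k - avg + avg = y t i l k); [lra | ring].
Qed.

Lemma subgrad_uniform_bound : exists Mr, 0 <= Mr /\
  forall l z g, K l z -> is_subgradient (r l) z g -> normd g <= Mr.
Proof.
apply: finite_bound_R r_subgrad_bounded => l M M' HM H z g Hz Hg.
exact: Rle_trans (H z g Hz Hg) HM.
Qed.

Lemma step_bounded : exists Mb, 0 <= Mb /\ forall t j l k, Rabs (dx sel x xt t j l k) <= Mb.
Proof.
have [Ky HKy] := y_bounded.
have [Mr [_ HMr]] := subgrad_uniform_bound.
have Hstep i t : normd (subd (xt t i) (x t i (sel t i))) <= 2 * (INR d * (INR N * Ky) + Mr) / tau i.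
  set l := sel t i; have Hx := x_inK t i; have [Kxt Hopt] := xt_argmin t i.
  have Hopt' := Hopt (x t i l) (Hx l); rewrite /fhat -/l in Hopt'.
  have Hvv : dotd (subd (scald (INR N) (y t i l)) (gf i (x t i) l)) (subd (x t i l) (x t i l)) = 0.
    by rewrite /dotd big1 // => k _; rewrite /subd; ring.
  rewrite Hvv Rplus_0_r in Hopt'.
  apply: Rle_trans (strongly_convex_argmin_dist (tau_pos i) (@ft_gradient i l _ Hx)
    (@ft_strongly_convex i l _ Hx) (r_convex l) (fun g => HMr l _ g (Hx l)) Kxt (Hx l) Hopt') _.
  apply: Rmult_le_compat_r; first exact: Rlt_le (Rinv_0_lt_compat _ (tau_pos i)).
  apply: Rmult_le_compat_l; first lra.
  apply: Rplus_le_compat_r; apply: Rle_trans (normd_le_sum_abs _) _.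
  rewrite -bigR_const_ord; apply: bigR_le => k _.
  rewrite gft_consistent // /subd /scald.
  rewrite (_ : gf i (x t i) l k + (INR N * y t i l k - gf i (x t i) l k) = INR N * y t i l k);
    last ring.
  rewrite Rabs_mult Rabs_pos_eq; last exact: pos_INR.
  by apply: Rmult_le_compat_l; [apply: pos_INR | apply: HKy].
have [M [HM0 HM]] := finite_bound_R (fun i M M' HMM (H : forall t, _ <= M) t =>
  Rle_trans _ _ _ (H t) HMM) (fun i => ex_intro _ _ (Hstep i)).
exists M; split => // t j l k; rewrite /dx; case: eqP => [-> | _].
  exact: Rle_trans (Rabs_le_normd _ k) (HM j t).
by rewrite Rabs_R0.
Qed.

Definition disagreement t := \big[Rplus/0]_(l < B) \big[Rplus/0]_(k < d)
  spread i0 (fun s i => x s i l k) t.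

Lemma disagreement_ge0 t : 0 <= disagreement t.
Proof. by apply: bigR_ge0 => l _; apply: bigR_ge0 => k _; apply: spread_ge0. Qed.

Lemma dist_avg_le_disagreement t i : normP (subP (x t i) (sbar phi x t)) <= disagreement t.
Proof.
apply: Rle_trans (normP_le_sum_abs _) _; apply: bigR_le => l _; apply: bigR_le => k _.
apply: weighted_avg_dist INR_N_gt0 _ (phi_sum t l) _ => j.
  exact: Rlt_le (phi_pos t j l).
exact: Rabs_sub_le_spread.
Qed.

Lemma disagreement_contracts : exists C, 0 <= C /\ forall t,
  disagreement (t + N * T)%nat <= (1 - contraction) * disagreement t + C * gamma t.
Proof.
have [Mb [HMb0 HMb]] := step_bounded.
pose c := 2 * (INR (N * T) * Mb).
have Hc : 0 <= c by rewrite /c; have := pos_INR (N * T); nra.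
exists (INR B * (INR d * c)); split.
  by apply: Rmult_le_pos; [apply: pos_INR | apply: Rmult_le_pos; [apply: pos_INR | exact: Hc]].
move=> t; rewrite /disagreement.
apply: Rle_trans (_ : \big[Rplus/0]_(l < B) \big[Rplus/0]_(k < d)
    ((1 - contraction) * spread i0 (fun s i => x s i l k) t + c * gamma t) <= _).
  apply: bigR_le => l _; apply: bigR_le => k _.
  have He s j : Rabs (gamma s * dx sel x xt s j l k) <= gamma s * Mb.
    have := gamma_01 s => Hg; rewrite Rabs_mult Rabs_pos_eq; last lra.
    by apply: Rmult_le_compat_l; [lra | apply: HMb].
  have [_ Hwin] := averaging_spread (fun s i => x_step s i l k) He.
  apply: Rle_trans (Hwin t) _; apply: Rplus_le_compat_l.
  suff : drift (fun s => gamma s * Mb) t (N * T) <= INR (N * T) * Mb * gamma t by rewrite /c; lra.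
  apply: Rle_trans (_ : \big[Rplus/0]_(u < N * T) (gamma t * Mb) <= _).
    by apply: bigR_le => u _; apply: Rmult_le_compat_r => //; apply: nonincreasing_add.
  by rewrite bigR_const_ord; right; ring.
rewrite bigR_mulr.
rewrite (eq_bigr (fun l => (1 - contraction) * \big[Rplus/0]_(k < d) spread i0 (fun s i => x s i l k) t
    + INR d * (c * gamma t))); last by move=> l _; rewrite big_split /= bigR_const_ord bigR_mulr.
by rewrite big_split /= bigR_const_ord; right; ring.
Qed.

Lemma disagreement_summable :
  summable (fun t => gamma t * disagreement t) /\ summable (fun t => disagreement t ^ 2).
Proof.
have [C [HC Hrec]] := disagreement_contracts.
apply: (window_contraction_summable _ contraction_pos HC disagreement_ge0 _ gamma_noninc
  gamma_sq_summable Hrec).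
  by rewrite muln_gt0 HN T_pos.
by move=> t; case: (gamma_01 t).
Qed.
Lemma consensus_error i :
  Un_cv (fun t => normP (subP (x t i) (sbar phi x t))) 0 /\
  summable (fun t => gamma t * normP (subP (x t i) (sbar phi x t))) /\
  summable (fun t => normP (subP (x t i) (sbar phi x t)) ^ 2).
Proof.
have [S1 S2] := disagreement_summable.
set u := fun t => normP (subP (x t i) (sbar phi x t)).
have Hu0 t : 0 <= u t by apply: normP_ge0.
have Hu t : u t <= disagreement t by apply: dist_avg_le_disagreement.
have Hu2 : summable (fun t => u t ^ 2).
  apply: summable_le S2 => t; first exact: pow2_ge_0.
  by apply: pow_incr; split; [apply: Hu0 | apply: Hu].
split; [|split] => //.
- by apply: cv0_of_sq_cv0 => //; apply: summable_cv0.
- apply: summable_le S1 => t; have := gamma_01 t => Hg.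
    by apply: Rmult_le_pos; [lra | apply: Hu0].
  by apply: Rmult_le_compat_l; [lra | apply: Hu].
Qed.
End Algorithm.

Lemma C1_near_gradient d (S : blk d -> Prop) (h : blk d -> R) (gh : blk d -> blk d) u :
  C1_near dotd subd S h gh -> S u -> has_gradient_at dotd subd h gh u.
Proof. by move=> [O [_ [HSO [Hgrad _]]]] Su; apply: Hgrad; apply: HSO. Qed.

Lemma uniform_window N B (sel : nat -> 'I_N -> 'I_B) :
  (forall i, exists T, (0 < T)%nat /\
     forall t l, exists tau, (tau < T)%nat /\ sel (t + tau)%nat i = l) ->
  exists T, (0 < T)%nat /\ forall i t l, exists tau, (tau < T)%nat /\ sel (t + tau)%nat i = l.
Proof.
move=> Hsel.
have [T HT] : exists T, forall i t l, exists tau, (tau < T)%nat /\ sel (t + tau)%nat i = l.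
  apply: finite_bound_nat => [i M M' HMM HM t l | i].
    by have [tau [Htau Hl]] := HM t l; exists tau; split => //; exact: leq_trans Htau HMM.
  by have [T [_ HT]] := Hsel i; exists T.
exists T.+1; split => // i t l; have [tau [Htau Hl]] := HT i t l.
by exists tau; split => //; exact: ltnW.
Qed.

Theorem mainTheorem5
  (d B N : nat) (Hd : (0 < d)%nat) (HB : (0 < B)%nat) (HN : (0 < N)%nat)
  (K : 'I_B -> blk d -> Prop)
  (HK : forall l, (exists u, K l u) /\ is_closed dotd subd (K l) /\ convex_set (K l))
  (f : 'I_N -> pt d B -> R) (gf : 'I_N -> pt d B -> pt d B) (L : 'I_N -> R)
  (Hf : forall i, C1_near dotP subP (inK K) (f i) (gf i))
  (HfL : forall i x y, inK K x -> inK K y ->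
           normP (subP (gf i x) (gf i y)) <= L i * normP (subP x y))
  (Hfb : forall i, exists M, forall x, inK K x -> normP (gf i x) <= M)
  (r : 'I_B -> blk d -> R)
  (Hr : forall l, convex_fun (r l) /\ bounded_subgradients_on (K l) (r l))
  (HU : forall M, exists rho, forall x, inK K x -> rho <= normP x -> M <= Uobj f r x)
  (* network: E j i <-> (j,i) is an edge *)
  (E : rel 'I_N) (HE : strongly_connected E) (Hloop : forall i, E i i)
  (sel : nat -> 'I_N -> 'I_B)
  (Hsel : forall i, exists T, (0 < T)%nat /\
            forall t (l : 'I_B), exists tau, (tau < T)%nat /\ sel (t + tau)%nat i = l)
  (* weights a t l i j = a_{ij l}^t *)
  (kappa : R) (a : nat -> 'I_B -> 'I_N -> 'I_N -> R) (Hkappa : 0 < kappa)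
  (Ha_pos : forall t l i j, inNil E sel t i l j -> kappa < a t l i j)
  (Ha_zero : forall t l i j, ~~ inNil E sel t i l j -> a t l i j = 0)
  (Ha_col : forall t l j, \big[Rplus/0]_(i < N) a t l i j = 1)
  (* surrogates ft i l z x = \tilde f_{i,l}(z; x), with gradient gft in z *)
  (ft : 'I_N -> 'I_B -> blk d -> pt d B -> R)
  (gft : 'I_N -> 'I_B -> blk d -> pt d B -> blk d) (tau : 'I_N -> R)
  (Htau : forall i, 0 < tau i)
  (Hft_C1 : forall i l x, inK K x ->
     C1_near dotd subd (K l) (fun z => ft i l z x) (fun z => gft i l z x))
  (Hft_sc : forall i l x, inK K x ->
     strongly_convex_on (K l) (tau i) (fun z => ft i l z x))
  (Hft_grad : forall i l x, inK K x -> forall k, gft i l (x l) x k = gf i x l k)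
  (Hft_lip : forall i l, exists Lt, forall z x y, K l z -> inK K x -> inK K y ->
     normd (subd (gft i l z x) (gft i l z y)) <= Lt * normP (subP x y))
  (gamma : nat -> R)
  (Hg_pos : forall t, 0 < gamma t <= 1)
  (Hg_dec : forall t, gamma (S t) <= gamma t)
  (Hg_div : cv_infty (psum gamma))
  (Hg_sq : exists s, Un_cv (psum (fun t => gamma t ^ 2)) s)
  (* x t i = x_{(i,:)}^t, y t i = y_{(i,:)}^t, phi t i l = phi_{(i,l)}^t,
     xt t i = \tilde x_{(i, l_i^t)}^t *)
  (x y : nat -> 'I_N -> pt d B) (phi : nat -> 'I_N -> 'I_B -> R)
  (xt : nat -> 'I_N -> blk d)
  (Hx0 : forall i, inK K (x 0%nat i))
  (Hy0 : forall i l k, y 0%nat i l k = gf i (x 0%nat i) l k)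
  (Hphi0 : forall i l, phi 0%nat i l = 1)
  (Hxt : forall t i,
     K (sel t i) (xt t i) /\
     forall z, K (sel t i) z ->
       fhat ft gf i (sel t i) (xt t i) (x t i) (y t i (sel t i)) + r (sel t i) (xt t i)
       <= fhat ft gf i (sel t i) z (x t i) (y t i (sel t i)) + r (sel t i) z)
  (Hphi : forall t i l,
     phi (S t) i l = \big[Rplus/0]_(j < N | inNil E sel t i l j) (a t l i j * phi t j l))
  (Hx : forall t i l k,
     x (S t) i l k = \big[Rplus/0]_(j < N | inNil E sel t i l j)
        (a t l i j * phi t j l / phi (S t) i l *
           (x t j l k + gamma t * dx sel x xt t j l k)))
  (Hy : forall t i l k,
     y (S t) i l k = \big[Rplus/0]_(j < N | inNil E sel t i l j)
        (a t l i j / phi (S t) i l *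
           (phi t j l * y t j l k + gf j (x (S t) j) l k - gf j (x t j) l k))) :
  forall i : 'I_N,
    Un_cv (fun t => normP (subP (x t i) (sbar phi x t))) 0 /\
    (exists s, Un_cv (psum (fun t => gamma t * normP (subP (x t i) (sbar phi x t)))) s) /\
    (exists s, Un_cv (psum (fun t => normP (subP (x t i) (sbar phi x t)) ^ 2)) s).
Proof.
move=> i.
have [T [HT Hwin]] := uniform_window Hsel.
have K_convex l : convex_set (K l) by case: (HK l) => _ [].
have ft_gradient i' l x' (Hx' : inK K x') := C1_near_gradient (Hft_C1 i' l x' Hx') (Hx' l).
exact: (consensus_error HN K_convex Hfb (fun l => proj1 (Hr l)) (fun l => proj2 (Hr l))
  HE HT Hwin Hkappa Ha_pos Ha_zero Ha_col Htau ft_gradient Hft_sc Hft_grad Hg_pos Hg_dec Hg_sq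
  Hx0 Hy0 Hphi0 Hxt Hphi Hx Hy i).
Qed.
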